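(* Let $p,q\in(0,1/2)$ and let $S_1(x)=px$, $S_2(x)=qx$, $S_3(x)=px+1-p$, $S_4(x)=qx+1-q$ be maps $\mathbb R\to\mathbb R$. Let $K=K_{pq}$ be the attractor of $\{S_1,S_2,S_3,S_4\}$ and $A=S_3(K)\cup S_4(K)$. Then: (i) $S_1S_2=S_2S_1$ and $S_3S_4=S_4S_3$; (ii) $K=\omega(K)$, where $\omega(x)=1-x$; (iii) for $i=1,2$ and any integers $m\neq n$, $S_i^m(A)\cap S_i^n(A)=\varnothing$; (iv) for any integers $m,n\ge 0$, $S_1^mS_2^n(K)\subseteq S_1^m(K)\cap S_2^n(K)$; (v) $K\setminus\{0\}=\bigcup_{m,n=0}^{\infty}S_1^mS_2^n(A)$.
   Context: The attractor of a finite system of contractions $\{S_1,\dots,S_m\}$ of $\mathbb R$ is the unique nonempty compact set $K$ with $K=\bigcup_i S_i(K)$. Powers $S_i^m$ denote $m$-fold composition (with $S_i^0=\mathrm{Id}$ and negative powers meaning powers of the inverse map). *)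

From HB Require Import structures.
From mathcomp Require Import all_boot all_order all_algebra.
From mathcomp Require Import all_classical all_reals all_analysis.
Set Implicit Arguments. Unset Strict Implicit. Unset Printing Implicit Defensive.
Import Order.TTheory GRing.Theory Num.Theory.
Import numFieldNormedType.Exports.
Local Open Scope ring_scope.
Local Open Scope classical_set_scope.

Definition S1 {R : realType} (p : R) (x : R) : R := p * x.
Definition S2 {R : realType} (q : R) (x : R) : R := q * x.
Definition S3 {R : realType} (p : R) (x : R) : R := p * x + 1 - p.
Definition S4 {R : realType} (q : R) (x : R) : R := q * x + 1 - q.
Definition omega {R : realType} (x : R) : R := 1 - x.

Definition Slin_inv {R : realType} (c : R) (x : R) : R := x / c.

(* Integer power of a map f with given inverse finv:
   f^m = m-fold composition for m >= 0, (finv)^|m| for m < 0. *)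
Definition zpow_map {T : Type} (f finv : T -> T) (m : int) : T -> T :=
  match m with
  | Posz n => iter n f
  | Negz n => iter n.+1 finv
  end.

Definition is_attractor {R : realType} (fs : seq (R -> R)) (K : set R) : Prop :=
  K !=set0 /\ compact K /\ K = \bigcup_(i in [set i : nat | (i < size fs)%N]) (nth id fs i @` K).

(* All four maps are 1/2-Lipschitz, so the attractor lies in every nonempty
   closed set that they map into itself.  Applied to [0, 1], and to the preimage
   of K under omega (omega conjugates S1, S2 into S3, S4), this gives K ⊆ [0, 1]
   and omega(K) = K.  Hence A ⊆ (1/2, 1], a fundamental domain of x ↦ c x on
   (0, 1] for c < 1/2, which gives (iii).  For (v), a nonzero point of K that is
   not in A is S1 y or S2 y with y ∈ K at least twice as large, and this can only
   happen finitely often since K ⊆ [0, 1]. *)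

From mathcomp Require Import all_boot all_order all_algebra.
From mathcomp Require Import all_classical all_reals all_analysis.
From mathcomp Require Import lra ring.
Set Implicit Arguments.
Unset Strict Implicit.
Unset Printing Implicit Defensive.

Import Order.TTheory GRing.Theory Num.Theory.
Import numFieldNormedType.Exports.
Local Open Scope ring_scope.
Local Open Scope classical_set_scope.

Lemma lipschitzP (R : realType) (k : R) (f : R -> R) :
  k.-lipschitz f <-> forall u v, `|f u - f v| <= k * `|u - v|.
Proof. by split=> [Lf u v|Lf [u v] _]; [exact: (Lf (u, v)) | exact: Lf]. Qed.

Lemma lipschitz_comp (R : realType) (k l : R) (f g : R -> R) : 0 <= k ->
  k.-lipschitz f -> l.-lipschitz g -> (k * l).-lipschitz (f \o g).
Proof.
move=> k0 /lipschitzP Lf /lipschitzP Lg; apply/lipschitzP => u v /=.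
by rewrite -mulrA; apply: le_trans (Lf _ _) _; rewrite ler_wpM2l.
Qed.

Lemma exists_expr_lt (R : realType) (r e : R) :
  0 <= r < 1 -> 0 < e -> exists n, r ^+ n < e.
Proof.
move=> /andP[r0 r1] e0.
have /cvgrPdist_lt/(_ e e0) [N _ HN] := @cvg_expr R r ltac:(by rewrite ger0_norm).
by exists N; have := HN N (leqnn N); rewrite sub0r normrN ger0_norm // exprn_ge0.
Qed.

Section AttractorMinimality.
Variables (R : realType) (fs : seq (R -> R)) (r : R) (K C : set R).
Hypothesis r_ge0 : 0 <= r.
Hypothesis r_lt1 : r < 1.
Hypothesis fs_lipschitz : forall i, (i < size fs)%N -> r.-lipschitz (nth id fs i).
Hypothesis K_attractor : is_attractor fs K.
Hypothesis C_closed : closed C.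
Hypothesis C_invariant : forall i, (i < size fs)%N -> nth id fs i @` C `<=` C.

Lemma attractor_iter_cover n x : K x ->
  exists F y, [/\ K y, (r ^+ n).-lipschitz F, F @` C `<=` C & x = F y].
Proof.
case: K_attractor => _ [_ KE].
elim: n x => [|n IH] x Kx.
  by exists id, x; split=> //; [apply/lipschitzP => u v; rewrite mul1r | move=> _ [y ? <-]].
have [F [y [Ky LF FC ->]]] := IH x Kx.
move: Ky; rewrite {1}KE => -[i /= i_lt [z Kz <-]].
exists (F \o nth id fs i), z; split=> //.
- by rewrite exprSr; apply: lipschitz_comp; rewrite ?exprn_ge0 //; exact: fs_lipschitz.
- move=> _ [w Cw <-]; apply: FC; exists (nth id fs i w) => //.
  by apply: C_invariant i_lt _ _; exists w.
Qed.

Lemma attractor_sub_closed : C !=set0 -> K `<=` C.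
Proof.
case=> z0 Cz0 x Kx; case: K_attractor => _ [/compact_bounded [M0 [_ KM0]] _].
pose M : R := `|M0| + 1.
have KM y : K y -> `|y| <= M by apply: KM0; rewrite /M; have := ler_norm M0; lra.
rewrite (closure_id C).1 // => B /nbhs_ballP [e /= e0 eB].
set D := M + `|z0|.
have D0 : 0 < D by rewrite /D /M; have := normr_ge0 M0; have := normr_ge0 z0; lra.
have [n rn] := @exists_expr_lt R r (e / D) ltac:(by rewrite r_ge0) (divr_gt0 e0 D0).
have [F [y [Ky /lipschitzP LF FC xE]]] := attractor_iter_cover n Kx.
exists (F z0); split; first by apply: FC; exists z0.
apply: eB; rewrite /ball /= xE; apply: le_lt_trans (LF _ _) _.
have yz0 : `|y - z0| <= D by apply: le_trans (ler_normB _ _) _; rewrite lerD2r KM.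
apply: le_lt_trans (ler_wpM2l (exprn_ge0 n r_ge0) yz0) _.
by rewrite -ltr_pdivlMr.
Qed.

End AttractorMinimality.

Lemma zpow_map_scale (R : realType) (c x : R) (m : int) : c != 0 ->
  zpow_map (fun y => c * y) (Slin_inv c) m x = c ^ m * x.
Proof.
move=> c0; case: m => n; first by rewrite /= iter_mulr.
change (iter n.+1 (Slin_inv c) x = c ^- n.+1 * x).
elim: n.+1 => [|k IH] /=; first by rewrite expr0 invr1 mul1r.
by rewrite IH /Slin_inv exprSr invfM mulrAC.
Qed.

Lemma scale_orbit_inj (R : realType) (c a b : R) (m n : int) : 0 < c ->
  c < a <= 1 -> c < b <= 1 -> c ^ m * a = c ^ n * b -> m = n.
Proof.
wlog mn : m n a b / m <= n.
  move=> hw c0 ha hb E; case: (lerP m n) => mn; first exact: hw mn c0 ha hb E.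
  by apply/esym; apply: hw (ltW mn) c0 hb ha (esym E).
move=> c0 /andP[ca a1] /andP[cb b1] E.
apply/eqP; rewrite eq_le mn leNgt; apply/negP => {}mn.
have c0' : c != 0 by rewrite gt_eqF.
have c1 : c < 1 by apply: lt_le_trans a1.
have {E} : a = c ^ (n - m) * b.
  by apply: (mulfI (expfz_neq0 m c0')); rewrite mulrA -expfzDr // addrC subrK.
have mn1 : 1 <= n - m by rewrite lerBrDr addrC lezD1.
have : c ^ (n - m) <= c.
  by rewrite -[X in _ <= X]expr1z ler_piXz2l //; exact: le_trans ler01 mn1.
have : 0 <= c ^ (n - m) by rewrite exprz_ge0 ?ltW.
nra.
Qed.

Lemma scale_zpow_disjoint (R : realType) (c : R) (A : set R) (m n : int) :
  0 < c -> (forall a, A a -> c < a <= 1) -> m <> n ->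
  zpow_map (fun x => c * x) (Slin_inv c) m @` A `&`
  zpow_map (fun x => c * x) (Slin_inv c) n @` A = set0.
Proof.
move=> c0 Ac mn; apply/disjoints_subset => _ [a Aa <-] [b Ab].
rewrite !zpow_map_scale ?gt_eqF // => /esym E.
exact: mn (scale_orbit_inj c0 (Ac a Aa) (Ac b Ab) E).
Qed.

Section FourMapIFS.
Variables (R : realType) (p q : R) (K : set R).
Hypothesis p_bounds : 0 < p < 1/2.
Hypothesis q_bounds : 0 < q < 1/2.

Local Notation ifs := [:: S1 p; S2 q; S3 p; S4 q].
Hypothesis K_attractor : is_attractor ifs K.

Local Notation A := (S3 p @` K `|` S4 q @` K).

Lemma K_cover x : K x -> exists2 y, K y &
  [\/ x = S1 p y, x = S2 q y, x = S3 p y | x = S4 q y].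
Proof.
case: K_attractor => _ [_ KE]; rewrite {1}KE => -[i /= i4 [y Ky <-]]; exists y => //.
by case: i i4 => [|[|[|[|]]]] // _; [apply: Or41 | apply: Or42 | apply: Or43 | apply: Or44].
Qed.

Lemma K_stable y : K y -> [/\ K (S1 p y), K (S2 q y), K (S3 p y) & K (S4 q y)].
Proof.
case: K_attractor => _ [_ KE] Ky; rewrite KE.
by split; [exists 0%N | exists 1%N | exists 2%N | exists 3%N] => //; exists y.
Qed.

Lemma ifs_lipschitz i : (i < size ifs)%N -> (2^-1).-lipschitz (nth id ifs i).
Proof.
have scale (c d : R) : 0 < c < 1/2 -> `|c * d| <= 2^-1 * `|d|.
  by case/andP=> c0 c2; rewrite normrM gtr0_norm // ler_wpM2r //; lra.
move=> i4; apply/lipschitzP => u v; rewrite /S1 /S2 /S3 /S4.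
case: i i4 => [|[|[|[|]]]] //= _.
- by rewrite -mulrBr scale.
- by rewrite -mulrBr scale.
- by rewrite (_ : _ - _ = p * (u - v)) ?scale //; ring.
- by rewrite (_ : _ - _ = q * (u - v)) ?scale //; ring.
Qed.

Lemma K_sub_closed_stable (C : set R) : closed C -> C !=set0 ->
  (forall x, C x -> [/\ C (S1 p x), C (S2 q x), C (S3 p x) & C (S4 q x)]) -> K `<=` C.
Proof.
move=> Ccl C0 CS; apply: (attractor_sub_closed _ _ ifs_lipschitz K_attractor Ccl _ C0).
- by rewrite invr_ge0.
- by rewrite invf_lt1 // ltr1n.
- by move=> i i4 _ [x /CS [? ? ? ?] <-]; case: i i4 => [|[|[|[|]]]].
Qed.

Lemma K_bounds x : K x -> 0 <= x <= 1.
Proof.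
case/andP: p_bounds => p0 p2; case/andP: q_bounds => q0 q2.
suff /[apply] : K `<=` `[0, 1] by rewrite /= in_itv.
apply: K_sub_closed_stable; first exact: itv_closed.
  by exists 0; rewrite /= in_itv /= lexx ler01.
move=> y; rewrite /= !in_itv /= /S1 /S2 /S3 /S4 => /andP[y0 y1].
by split; apply/andP; split; nra.
Qed.

Lemma K_reflect_stable x : K x -> K (omega x).
Proof.
have omega_cont : continuous (@omega R).
  by move=> x0; apply: cvgB; [exact: cvg_cst | exact: cvg_id].
apply: (K_sub_closed_stable (C := omega @^-1` K)).
- apply: preimage_closed => [y _|]; first exact: omega_cont.
  by case: K_attractor => _ [cK _]; exact: compact_closed (@Rhausdorff R) cK.
- by case: K_attractor => -[z Kz] _; exists (omega z); rewrite /= /omega opprB addrC subrK.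
- move=> y /K_stable[K1 K2 K3 K4]; rewrite /= /omega /S1 /S2 /S3 /S4 in K1 K2 K3 K4 *.
  split.
  + by rewrite (_ : 1 - _ = p * (1 - y) + 1 - p) //; ring.
  + by rewrite (_ : 1 - _ = q * (1 - y) + 1 - q) //; ring.
  + by rewrite (_ : 1 - _ = p * (1 - y)) //; ring.
  + by rewrite (_ : 1 - _ = q * (1 - y)) //; ring.
Qed.

Lemma K_reflect : K = omega @` K.
Proof.
apply/seteqP; split=> [x Kx|_ [y Ky <-]]; last exact: K_reflect_stable.
by exists (omega x); [exact: K_reflect_stable | rewrite /omega opprB addrC subrK].
Qed.

Lemma A_bounds a : A a -> 1/2 < a <= 1.
Proof.
case/andP: p_bounds => p0 p2; case/andP: q_bounds => q0 q2.
by case=> -[y /K_bounds]; rewrite /S3 /S4 => /andP[y0 y1] <-;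
  apply/andP; split; nra.
Qed.

Lemma A_scale_zpow_disjoint (c : R) (m n : int) : 0 < c < 1/2 -> m <> n ->
  zpow_map (fun x => c * x) (Slin_inv c) m @` A `&`
  zpow_map (fun x => c * x) (Slin_inv c) n @` A = set0.
Proof.
case/andP=> c0 c2; apply: scale_zpow_disjoint => // a /A_bounds /andP[a2 ->].
by rewrite andbT (lt_trans c2).
Qed.

Lemma iter_S1_S2 m n y : iter m (S1 p) (iter n (S2 q) y) = p ^+ m * (q ^+ n * y).
Proof. by rewrite !iter_mulr. Qed.

Lemma iter_S1_S2C m n y :
  iter n (S2 q) (iter m (S1 p) y) = iter m (S1 p) (iter n (S2 q) y).
Proof. by rewrite !iter_mulr mulrCA. Qed.

Lemma K_iter_S1_S2 m n y : K y -> K (iter m (S1 p) (iter n (S2 q) y)).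
Proof.
move=> Ky; elim: m => [|m IH] /=; last by case: (K_stable IH).
by elim: n => [|n IH] //=; case: (K_stable IH).
Qed.

Lemma iter_S1_S2_image_sub m n :
  (iter m (S1 p) \o iter n (S2 q)) @` K `<=` iter m (S1 p) @` K `&` iter n (S2 q) @` K.
Proof.
move=> _ [y Ky <-]; split; first by exists (iter n (S2 q) y) => //; exact: (K_iter_S1_S2 0).
by exists (iter m (S1 p) y); [exact: (K_iter_S1_S2 m 0) | exact: iter_S1_S2C].
Qed.

Lemma K_decomposition N x : K x -> 2^-1 ^+ N < x ->
  exists m n, exists2 a, A a & x = iter m (S1 p) (iter n (S2 q) a).
Proof.
have halve (c y t : R) : 0 < c < 1/2 -> 0 <= y -> 0 <= t -> 2^-1 * t < c * y -> t < y.
  by case/andP=> c0 c2 y0 t0; nra.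
elim: N x => [|N IH] x Kx.
  have /andP[_ x1] := K_bounds Kx; rewrite expr0 => x_gt1; exfalso; lra.
have t0 : 0 <= 2^-1 ^+ N :> R by rewrite exprn_ge0 // invr_ge0.
rewrite exprS; have [y Ky [->|->|->|->]] := K_cover Kx => xN.
- have /andP[y0 _] := K_bounds Ky.
  have [m [n [a Aa ->]]] := IH y Ky (halve _ _ _ p_bounds y0 t0 xN).
  by exists m.+1, n, a.
- have /andP[y0 _] := K_bounds Ky.
  have [m [n [a Aa ->]]] := IH y Ky (halve _ _ _ q_bounds y0 t0 xN).
  by exists m, n.+1, a => //; exact: iter_S1_S2C m 1 _.
- by exists 0%N, 0%N, (S3 p y) => //; left; exists y.
- by exists 0%N, 0%N, (S4 q y) => //; right; exists y.
Qed.

Lemma K_setD0 :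
  K `\ 0 = \bigcup_(mn in [set: nat * nat]) ((iter mn.1 (S1 p) \o iter mn.2 (S2 q)) @` A).
Proof.
apply/seteqP; split=> [x [Kx /eqP x0]|_ [[m n] _ [a Aa <-]]] /=.
  have /andP[x_ge0 _] := K_bounds Kx.
  have half : 0 <= (2^-1 : R) < 1 by rewrite invr_ge0 ler0n invf_lt1 ?ltr1n.
  have x_gt0 : 0 < x by rewrite lt_neqAle eq_sym x0.
  have [N xN] := exists_expr_lt half x_gt0.
  by have [m [n [a Aa ->]]] := K_decomposition Kx xN; exists (m, n) => //; exists a.
case/andP: p_bounds => p0 _; case/andP: q_bounds => q0 _.
have /andP[a_gt0 _] : 0 < a <= 1 by have /andP[a2 ->] := A_bounds Aa; rewrite andbT; lra.
split; first by case: Aa => -[y Ky <-]; case: (K_stable Ky) => *; exact: K_iter_S1_S2.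
by rewrite iter_S1_S2; apply/eqP; rewrite gt_eqF // !mulr_gt0 ?exprn_gt0.
Qed.

End FourMapIFS.

Theorem proposition1 (R : realType) (p q : R) (K : set R) :
  0 < p < 1/2 -> 0 < q < 1/2 ->
  is_attractor [:: S1 p; S2 q; S3 p; S4 q] K ->
  let A := (S3 p @` K) `|` (S4 q @` K) in
  (* (i) *)
  (S1 p \o S2 q = S2 q \o S1 p /\ S3 p \o S4 q = S4 q \o S3 p) /\
  (* (ii) *)
  K = omega @` K /\
  (* (iii) *)
  (forall m n : int, m <> n ->
     (zpow_map (S1 p) (Slin_inv p) m @` A) `&` (zpow_map (S1 p) (Slin_inv p) n @` A) = set0 /\
     (zpow_map (S2 q) (Slin_inv q) m @` A) `&` (zpow_map (S2 q) (Slin_inv q) n @` A) = set0) /\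
  (* (iv) *)
  (forall m n : nat,
     (iter m (S1 p) \o iter n (S2 q)) @` K `<=` (iter m (S1 p) @` K) `&` (iter n (S2 q) @` K)) /\
  (* (v) *)
  K `\ 0 = \bigcup_(mn in [set: nat * nat]) ((iter mn.1 (S1 p) \o iter mn.2 (S2 q)) @` A).
Proof.
move=> hp hq attK A.
split; first by split; apply: funext => x; rewrite /= /S1 /S2 /S3 /S4; ring.
split; first exact: K_reflect hp hq attK.
split; first by move=> m n mn; split; exact: A_scale_zpow_disjoint.
split; first exact: iter_S1_S2_image_sub attK.
exact: K_setD0.
Qed.
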